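(* Let $(\mathcal{L},[\cdot,\cdot,\cdot]_{\mathcal{L}},\mathbf{1})$ be a central (right) $3$-Leibniz algebra over a field $\mathbb{K}$. Then $(\mathcal{L}\otimes\mathcal{L},\{\cdot,\cdot\},\mathbf{1}\otimes\mathbf{1})$ is a central Leibniz algebra, where $\{x_1\otimes x_2,y_1\otimes y_2\}=[x_1,y_1,y_2]_{\mathcal{L}}\otimes x_2+x_1\otimes[x_2,y_1,y_2]_{\mathcal{L}}$. Consequently, the linear map $R$ on $(\mathcal{L}\otimes\mathcal{L})^{\otimes2}$ given by $R((x_1\otimes x_2)\otimes(y_1\otimes y_2))=(y_1\otimes y_2)\otimes(x_1\otimes x_2)+(\mathbf{1}\otimes\mathbf{1})\otimes([x_1,y_1,y_2]_{\mathcal{L}}\otimes x_2)+(\mathbf{1}\otimes\mathbf{1})\otimes(x_1\otimes[x_2,y_1,y_2]_{\mathcal{L}})$ is a solution of the Yang-Baxter equation.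
   Context: A (right) $3$-Leibniz algebra is a vector space $\mathcal{L}$ with a trilinear map $[\cdot,\cdot,\cdot]_{\mathcal{L}}$ such that $[[x_1,x_2,x_3]_{\mathcal{L}},y_1,y_2]_{\mathcal{L}}=[[x_1,y_1,y_2]_{\mathcal{L}},x_2,x_3]_{\mathcal{L}}+[x_1,[x_2,y_1,y_2]_{\mathcal{L}},x_3]_{\mathcal{L}}+[x_1,x_2,[x_3,y_1,y_2]_{\mathcal{L}}]_{\mathcal{L}}$. It is central with central element $\mathbf{1}\in\mathcal{L}$ if $[\mathbf{1},x,y]_{\mathcal{L}}=[x,\mathbf{1},y]_{\mathcal{L}}=[x,y,\mathbf{1}]_{\mathcal{L}}=0$ for all $x,y$. A central Leibniz algebra is a Leibniz algebra ($[[x,y],z]=[[x,z],y]+[x,[y,z]]$) with an element $\mathbf{1}$ such that $[\mathbf{1},x]=0=[x,\mathbf{1}]$ for all $x$. A solution of the Yang-Baxter equation on $V$ is an invertible linear $R:V\otimes V\to V\otimes V$ with $(R\otimes\mathrm{Id})(\mathrm{Id}\otimes R)(R\otimes\mathrm{Id})=(\mathrm{Id}\otimes R)(R\otimes\mathrm{Id})(\mathrm{Id}\otimes R)$. *)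

From HB Require Import structures.
From mathcomp Require Import all_boot all_algebra.
Set Implicit Arguments. Unset Strict Implicit. Unset Printing Implicit Defensive.
Import GRing.Theory.
Local Open Scope ring_scope.

(* Tensor products of arbitrary
   (possibly infinite-dimensional) vector spaces are given by their universal
   property, since MathComp has no built-in tensor product. *)

Definition lin (K : fieldType) (U W : lmodType K) (f : U -> W) : Prop :=
  forall (a : K) (x y : U), f (a *: x + y) = a *: f x + f y.

Definition bilin (K : fieldType) (U V W : lmodType K) (f : U -> V -> W) : Prop :=
  (forall v, lin (fun u => f u v)) /\ (forall u, lin (f u)).

Definition trilin (K : fieldType) (U V X W : lmodType K)
  (f : U -> V -> X -> W) : Prop :=
  [/\ (forall v x, lin (fun u => f u v x)),
      (forall u x, lin (fun v => f u v x)) &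
      (forall u v, lin (f u v))].

Record tensor2 (K : fieldType) (U V : lmodType K) := Tensor2 {
  t2_sort :> lmodType K;
  t2 : U -> V -> t2_sort;
  t2_bilin : bilin t2;
  t2_univ : forall (W : lmodType K) (f : U -> V -> W), bilin f ->
    exists g : t2_sort -> W, lin g /\ forall u v, g (t2 u v) = f u v;
  t2_uniq : forall (W : lmodType K) (g1 g2 : t2_sort -> W), lin g1 -> lin g2 ->
    (forall u v, g1 (t2 u v) = g2 (t2 u v)) -> g1 =1 g2 }.

Record tensor3 (K : fieldType) (U V X : lmodType K) := Tensor3 {
  t3_sort :> lmodType K;
  t3 : U -> V -> X -> t3_sort;
  t3_trilin : trilin t3;
  t3_univ : forall (W : lmodType K) (f : U -> V -> X -> W), trilin f ->
    exists g : t3_sort -> W, lin g /\ forall u v x, g (t3 u v x) = f u v x;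
  t3_uniq : forall (W : lmodType K) (g1 g2 : t3_sort -> W), lin g1 -> lin g2 ->
    (forall u v x, g1 (t3 u v x) = g2 (t3 u v x)) -> g1 =1 g2 }.

Definition central_3Leibniz (K : fieldType) (L : lmodType K)
  (br : L -> L -> L -> L) (one : L) : Prop :=
  [/\ trilin br,
      (forall x1 x2 x3 y1 y2 : L,
        br (br x1 x2 x3) y1 y2 =
        br (br x1 y1 y2) x2 x3 + br x1 (br x2 y1 y2) x3 + br x1 x2 (br x3 y1 y2)) &
      (forall x y : L, [/\ br one x y = 0, br x one y = 0 & br x y one = 0])].

Definition central_Leibniz (K : fieldType) (A : lmodType K)
  (br : A -> A -> A) (one : A) : Prop :=
  [/\ bilin br,
      (forall x y z : A, br (br x y) z = br (br x z) y + br x (br y z)) &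
      (forall x : A, br one x = 0 /\ br x one = 0)].

(* Here R(x)Id and Id(x)R are the linear maps R12, R23 with
   R12 (a(x)b(x)c) = m3 (R (a(x)b)) c and R23 (a(x)b(x)c) = m1 a (R (b(x)c)),
   where m3 : (V(x)V) x V -> V(x)V(x)V and m1 : V x (V(x)V) -> V(x)V(x)V are the
   canonical bilinear identifications. *)
Definition YBE_solution (K : fieldType) (V : lmodType K)
  (VV : tensor2 V V) (VVV : tensor3 V V V) (R : VV -> VV) : Prop :=
  [/\ lin R, bijective R &
    forall (m1 : V -> VV -> VVV) (m3 : VV -> V -> VVV) (R12 R23 : VVV -> VVV),
      bilin m1 -> bilin m3 ->
      (forall a b c, m1 a (t2 VV b c) = t3 VVV a b c) ->
      (forall a b c, m3 (t2 VV a b) c = t3 VVV a b c) ->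
      lin R12 -> lin R23 ->
      (forall a b c, R12 (t3 VVV a b c) = m3 (R (t2 VV a b)) c) ->
      (forall a b c, R23 (t3 VVV a b c) = m1 a (R (t2 VV b c))) ->
      forall w, R12 (R23 (R12 w)) = R23 (R12 (R23 w))].

From HB Require Import structures.
From mathcomp Require Import all_boot all_algebra.
From Stdlib Require Import ClassicalEpsilon.
Set Implicit Arguments. Unset Strict Implicit. Unset Printing Implicit Defensive.
Import GRing.Theory.
Local Open Scope ring_scope.

(* The 3-Leibniz identity says that every [ad y1 y2 = [-, y1, y2]] is a
   derivation of the ternary bracket; its extension [ad y1 y2 (x) 1 + 1 (x) ad y1 y2]
   to L (x) L is then a derivation of the bracket {-, -}, which is exactly the
   Leibniz identity, and centrality of 1 makes 1 (x) 1 central.  For any central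
   Leibniz algebra (A, B, e) the map R (U (x) V) = V (x) U + e (x) B U V has
   inverse U (x) V |-> V (x) U - B V U (x) e; on a (x) b (x) c, once centrality
   has removed every term containing B e _ or B _ e, the two sides of the braid
   relation agree term by term except on the e (x) e component, where they differ
   by one instance of the Leibniz identity. *)

Section Linear.
Variables (K : fieldType) (U V W : lmodType K).
Implicit Types (f g : U -> W).

Lemma lin0 f : lin f -> f 0 = 0.
Proof. by move=> fL; have := fL (-1) 0 0; rewrite scaler0 addr0 scaleN1r addNr. Qed.

Lemma linD f : lin f -> forall x y, f (x + y) = f x + f y.
Proof. by move=> fL x y; have := fL 1 x y; rewrite !scale1r. Qed.

Lemma linZ f : lin f -> forall a x, f (a *: x) = a *: f x.
Proof. by move=> fL a x; have := fL a x 0; rewrite !addr0 (lin0 fL) addr0. Qed.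

Lemma linN f : lin f -> forall x, f (- x) = - f x.
Proof. by move=> fL x; rewrite -scaleN1r (linZ fL) scaleN1r. Qed.

Lemma linB f : lin f -> forall x y, f (x - y) = f x - f y.
Proof. by move=> fL x y; rewrite (linD fL) (linN fL). Qed.

Lemma lin_zero : lin (fun _ : U => 0 : W).
Proof. by move=> a x y; rewrite scaler0 addr0. Qed.

Lemma lin_add f g : lin f -> lin g -> lin (fun x => f x + g x).
Proof. by move=> fL gL a x y; rewrite fL gL scalerDr addrACA. Qed.

Lemma lin_scale b f : lin f -> lin (fun x => b *: f x).
Proof. by move=> fL a x y; rewrite fL scalerDr !scalerA mulrC. Qed.

Lemma lin_sub f g : lin f -> lin g -> lin (fun x => f x - g x).
Proof. by move=> fL gL a x y; rewrite fL gL opprD scalerBr addrACA. Qed.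

Lemma lin_comp (h : V -> W) (k : U -> V) : lin h -> lin k -> lin (fun x => h (k x)).
Proof. by move=> hL kL a x y; rewrite kL hL. Qed.

End Linear.

Section Multilinear.
Variables (K : fieldType) (U V X W : lmodType K).

Lemma trilin_add (f g : U -> V -> X -> W) :
  trilin f -> trilin g -> trilin (fun u v x => f u v x + g u v x).
Proof.
by case=> f1 f2 f3 [g1 g2 g3]; split=> *; apply: lin_add.
Qed.

Lemma trilin_swap23 (f : U -> V -> V -> W) :
  trilin f -> trilin (fun u v x => f u x v).
Proof. by case=> f1 f2 f3; split=> *. Qed.

Lemma trilin_comp_l (B : U -> U -> U) :
  bilin B -> trilin (fun x y z => B (B x y) z).
Proof.
case=> Bl Br; split=> *; [exact: lin_comp (Bl _) (Bl _) | exact: lin_comp (Bl _) (Br _)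
  | exact: Br].
Qed.

Lemma trilin_comp_r (B : U -> U -> U) :
  bilin B -> trilin (fun x y z => B x (B y z)).
Proof.
case=> Bl Br; split=> *; [exact: Bl | exact: lin_comp (Br _) (Bl _)
  | exact: lin_comp (Br _) (Br _)].
Qed.

Lemma lin_bilin_comp (h : W -> X) (f : U -> V -> W) :
  lin h -> bilin f -> bilin (fun u v => h (f u v)).
Proof. by move=> hL [fl fr]; split=> *; apply: lin_comp hL _. Qed.

End Multilinear.

Section TensorLift.
Variables (K : fieldType) (U V W : lmodType K) (T : tensor2 U V).

Lemma t2_lift_family (I : Type) (f : I -> U -> V -> W) : (forall i, bilin (f i)) ->
  exists g : I -> T -> W, (forall i, lin (g i)) /\ forall i u1 u2, g i (t2 T u1 u2) = f i u1 u2.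
Proof.
move=> fB; have [g gP] := ClassicalEpsilon.choice _ (fun i => t2_univ T (fB i)).
by exists g; split=> i; case: (gP i).
Qed.

End TensorLift.

Section TensorExt.
Variables (K : fieldType) (U1 U2 V1 V2 X1 X2 W : lmodType K).
Variables (TU : tensor2 U1 U2) (TV : tensor2 V1 V2) (TX : tensor2 X1 X2).

Lemma bilin_tensor_ext (P Q : TU -> TV -> W) : bilin P -> bilin Q ->
  (forall u1 u2 v1 v2, P (t2 TU u1 u2) (t2 TV v1 v2) = Q (t2 TU u1 u2) (t2 TV v1 v2)) ->
  forall u v, P u v = Q u v.
Proof.
move=> [Pl Pr] [Ql Qr] PQ u; apply: t2_uniq => [||v1 v2]; [exact: Pr | exact: Qr |].
by move: u; apply: t2_uniq => [||u1 u2]; [exact: Pl | exact: Ql | exact: PQ].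
Qed.

Lemma trilin_tensor_ext (P Q : TU -> TV -> TX -> W) : trilin P -> trilin Q ->
  (forall u1 u2 v1 v2 x1 x2, P (t2 TU u1 u2) (t2 TV v1 v2) (t2 TX x1 x2)
                          = Q (t2 TU u1 u2) (t2 TV v1 v2) (t2 TX x1 x2)) ->
  forall u v x, P u v x = Q u v x.
Proof.
move=> [P1 P2 P3] [Q1 Q2 Q3] PQ u v; apply: t2_uniq => [||x1 x2]; [exact: P3 | exact: Q3 |].
move: v; apply: t2_uniq => [||v1 v2]; [exact: P2 | exact: Q2 |].
by move: u; apply: t2_uniq => [||u1 u2]; [exact: P1 | exact: Q1 | exact: PQ].
Qed.

Definition quadrilin (f : U1 -> U2 -> V1 -> V2 -> W) :=
  (forall v1 v2, bilin (fun u1 u2 => f u1 u2 v1 v2)) /\ (forall u1 u2, bilin (f u1 u2)).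

Lemma t2_lift_quadrilin (f : U1 -> U2 -> V1 -> V2 -> W) : quadrilin f ->
  exists B : TU -> TV -> W, bilin B /\
    forall u1 u2 v1 v2, B (t2 TU u1 u2) (t2 TV v1 v2) = f u1 u2 v1 v2.
Proof.
move=> [fU fV].
have [D [DL DE]] :=
  t2_lift_family TU (f := fun (v : V1 * V2) u1 u2 => f u1 u2 v.1 v.2) (fun v => fU v.1 v.2).
have DC i j b : lin (fun u => b *: D i u + D j u) := lin_add (lin_scale b (DL i)) (DL j).
have DB u : bilin (fun v1 v2 => D (v1, v2) u).
  split=> [v2|v1] a x y; move: u; apply: t2_uniq => [||u1 u2] /=;
    [exact: DL | exact: DC | rewrite !DE | exact: DL | exact: DC | rewrite !DE].
  - exact: (fV u1 u2).1.
  - exact: (fV u1 u2).2.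
have [E [EL EE]] := t2_lift_family TV (f := fun u v1 v2 => D (v1, v2) u) DB.
exists E; split; last by move=> u1 u2 v1 v2; rewrite EE DE.
split=> [v|u]; last exact: EL.
move=> a x y; move: v; apply: t2_uniq => [||v1 v2]; first exact: EL.
  exact: lin_add (lin_scale _ (EL _)) (EL _).
by rewrite /= !EE DL.
Qed.

End TensorExt.

Section Braiding.
Variables (K : fieldType) (A : lmodType K) (B : A -> A -> A) (e : A) (AA : tensor2 A A).

Definition braiding (U V : A) : AA := t2 AA V U + t2 AA e (B U V).

Lemma braiding_bilin : bilin B -> bilin braiding.
Proof.
case=> Bl Br; have [tl tr] := t2_bilin AA.
by split=> [V|U]; [exact: lin_add (tr _) (lin_comp (tr _) (Bl _))
                 | exact: lin_add (tl _) (lin_comp (tr _) (Br _))].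
Qed.

Hypothesis BL : central_Leibniz B e.
Variable R : AA -> AA.
Hypotheses (RL : lin R) (RE : forall U V, R (t2 AA U V) = braiding U V).

Lemma braiding_bijective : bijective R.
Proof.
have [[Bl Br] _ Be] := BL; have [tl tr] := t2_bilin AA.
have SB : bilin (fun U V => t2 AA V U - t2 AA (B V U) e).
  by split=> [V|U]; [exact: lin_sub (tr _) (lin_comp (tl _) (Br _))
                   | exact: lin_sub (tl _) (lin_comp (tl _) (Bl _))].
have [S [SL SE]] := t2_univ AA SB.
exists S; apply: t2_uniq => [||U V] //; try exact: lin_comp.
- by rewrite RE /braiding (linD SL) !SE (Be _).2 (lin0 (tl _)) subr0 subrK.
- by rewrite SE (linB RL) !RE /braiding (Be _).2 (lin0 (tr _)) addr0 addrK.
Qed.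

Lemma braiding_YBE (AAA : tensor3 A A A) : YBE_solution AAA R.
Proof.
split=> // [|m1 m3 R12 R23 m1B m3B m1E m3E R12L R23L R12E R23E].
  exact: braiding_bijective.
have [[Bl _] BJ Be] := BL; have [_ t3m t3r] := t3_trilin AAA.
have R12t a b c : R12 (t3 AAA a b c) = t3 AAA b a c + t3 AAA e (B a b) c.
  by rewrite R12E RE /braiding (linD (m3B.1 _)) !m3E.
have R23t a b c : R23 (t3 AAA a b c) = t3 AAA a c b + t3 AAA a e (B b c).
  by rewrite R23E RE /braiding (linD (m1B.2 _)) !m1E.
apply: t3_uniq => [||a b c]; [do 2 apply: lin_comp => // | do 2 apply: lin_comp => // |].
rewrite !(R12t, R23t, linD R12L, linD R23L).
rewrite (Be b).2 (Be c).1 (Be e).1 (Be a).2 (lin0 (Bl _)).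
rewrite !(lin0 (t3m _ _)) !(lin0 (t3r _ _)) !addr0 (BJ a b c) (linD (t3r _ _)).
by rewrite !addrA [LHS](ACl (1*4*3*5*2*6)%AC).
Qed.

End Braiding.

Section TensorSquareBracket.
Variables (K : fieldType) (L : lmodType K) (br : L -> L -> L -> L) (TL : tensor2 L L).

Definition tensor_bracket x1 x2 y1 y2 : TL := t2 TL (br x1 y1 y2) x2 + t2 TL x1 (br x2 y1 y2).

Lemma tensor_bracket_quadrilin : trilin br -> quadrilin tensor_bracket.
Proof.
case=> br1 br2 br3; have [tl tr] := t2_bilin TL.
split=> [y1 y2|x1 x2]; split=> [u2|u1] /=.
- exact: lin_add (lin_comp (tl _) (br1 _ _)) (tl _).
- exact: lin_add (tr _) (lin_comp (tr _) (br1 _ _)).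
- exact: lin_add (lin_comp (tl _) (br2 _ _)) (lin_comp (tr _) (br2 _ _)).
- exact: lin_add (lin_comp (tl _) (br3 _ _)) (lin_comp (tr _) (br3 _ _)).
Qed.

Lemma tensor_bracket_exists : trilin br ->
  exists B : TL -> TL -> TL, bilin B /\
    forall x1 x2 y1 y2, B (t2 TL x1 x2) (t2 TL y1 y2) = tensor_bracket x1 x2 y1 y2.
Proof. by move/tensor_bracket_quadrilin; apply: t2_lift_quadrilin. Qed.

Variable one : L.
Hypothesis brL : central_3Leibniz br one.
Variable B : TL -> TL -> TL.
Hypothesis BB : bilin B.
Hypothesis BE : forall x1 x2 y1 y2, B (t2 TL x1 x2) (t2 TL y1 y2) = tensor_bracket x1 x2 y1 y2.

Lemma tensor_bracket_Leibniz x y z : B (B x y) z = B (B x z) y + B x (B y z).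
Proof.
have [[_ br2 br3] brJ _] := brL; have [tl tr] := t2_bilin TL.
move: x y z; apply: trilin_tensor_ext.
- exact: trilin_comp_l.
- exact: trilin_add (trilin_swap23 (trilin_comp_l BB)) (trilin_comp_r BB).
move=> x1 x2 y1 y2 z1 z2.
rewrite !BE /tensor_bracket !(linD (BB.1 _)) !(linD (BB.2 _)) !BE /tensor_bracket.
rewrite brJ (brJ x2) !(linD (tl _)) !(linD (tr _)).
by rewrite !addrA [LHS](ACl (1*5*4*6*2*7*3*8)%AC).
Qed.

Lemma tensor_bracket_central x : B (t2 TL one one) x = 0 /\ B x (t2 TL one one) = 0.
Proof.
have [_ _ brC] := brL; have [tl tr] := t2_bilin TL.
split; move: x; apply: t2_uniq => [||x1 x2];
  [exact: BB.2 | exact: lin_zero | | exact: BB.1 | exact: lin_zero |];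
  rewrite BE /tensor_bracket.
- by have [-> _ _] := brC x1 x2; rewrite (lin0 (tl _)) (lin0 (tr _)) addr0.
- by have [_ _ ->] := brC x1 one; have [_ _ ->] := brC x2 one;
    rewrite (lin0 (tl _)) (lin0 (tr _)) addr0.
Qed.

Lemma tensor_bracket_central_Leibniz : central_Leibniz B (t2 TL one one).
Proof.
split=> //; [exact: tensor_bracket_Leibniz | exact: tensor_bracket_central].
Qed.

Lemma braiding_tensor_bracket (TTL : tensor2 TL TL) x1 x2 y1 y2 :
  braiding B (t2 TL one one) TTL (t2 TL x1 x2) (t2 TL y1 y2) =
  t2 TTL (t2 TL y1 y2) (t2 TL x1 x2)
  + t2 TTL (t2 TL one one) (t2 TL (br x1 y1 y2) x2)
  + t2 TTL (t2 TL one one) (t2 TL x1 (br x2 y1 y2)).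
Proof. by rewrite /braiding BE /tensor_bracket (linD ((t2_bilin TTL).2 _)) addrA. Qed.

End TensorSquareBracket.

Theorem theorem5p5 (K : fieldType) (L : lmodType K)
  (br : L -> L -> L -> L) (one : L)
  (TL : tensor2 L L) (TTL : tensor2 TL TL) (T3 : tensor3 TL TL TL) :
  central_3Leibniz br one ->
  [/\ (exists B : TL -> TL -> TL, bilin B /\
         forall x1 x2 y1 y2 : L,
           B (t2 TL x1 x2) (t2 TL y1 y2) =
           t2 TL (br x1 y1 y2) x2 + t2 TL x1 (br x2 y1 y2)),
      (forall B : TL -> TL -> TL, bilin B ->
         (forall x1 x2 y1 y2 : L,
           B (t2 TL x1 x2) (t2 TL y1 y2) =
           t2 TL (br x1 y1 y2) x2 + t2 TL x1 (br x2 y1 y2)) ->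
         central_Leibniz B (t2 TL one one)),
      (exists R : TTL -> TTL, lin R /\
         forall x1 x2 y1 y2 : L,
           R (t2 TTL (t2 TL x1 x2) (t2 TL y1 y2)) =
           t2 TTL (t2 TL y1 y2) (t2 TL x1 x2)
           + t2 TTL (t2 TL one one) (t2 TL (br x1 y1 y2) x2)
           + t2 TTL (t2 TL one one) (t2 TL x1 (br x2 y1 y2))) &
      (forall R : TTL -> TTL, lin R ->
         (forall x1 x2 y1 y2 : L,
           R (t2 TTL (t2 TL x1 x2) (t2 TL y1 y2)) =
           t2 TTL (t2 TL y1 y2) (t2 TL x1 x2)
           + t2 TTL (t2 TL one one) (t2 TL (br x1 y1 y2) x2)
           + t2 TTL (t2 TL one one) (t2 TL x1 (br x2 y1 y2))) ->
         YBE_solution T3 R)].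
Proof.
move=> brL; have [brT _ _] := brL.
have [B [BB BE]] := tensor_bracket_exists TL brT.
have BL := tensor_bracket_central_Leibniz brL BB BE.
split.
- by exists B.
- exact: tensor_bracket_central_Leibniz brL.
- have [R [RL RE]] := t2_univ TTL (braiding_bilin (t2 TL one one) TTL BB).
  by exists R; split=> // x1 x2 y1 y2; rewrite RE (braiding_tensor_bracket one BE).
- move=> R RL RE; apply: (braiding_YBE BL RL).
  apply: bilin_tensor_ext => [||x1 x2 y1 y2].
  + exact: lin_bilin_comp RL (t2_bilin TTL).
  + exact: braiding_bilin.
  + by rewrite RE (braiding_tensor_bracket one BE).
Qed.
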